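(* If $q=1$, the unique optimal solution is the profile in which all users choose DP (i.e., $u_i=n_i$ and $v_i=0$ for all $i\in[m]$). If $q=0$, a pure strategy profile is optimal if and only if $|y_i-y_j|\le 1$ for all $i,j\in[m]$, where $y_i=u_i+v_i$.
   Context: Network model: there are $m\ge 2$ source nodes $s_1,\dots,s_m$ and one destination $d$. Source $s_i$ has a set $N_i$ of $n_i$ users. Each user generates an independent Poisson flow of packets of rate $\phi>0$; each direct link $(s_i,d)$ has service rate $\mu>0$; each sidelink loses packets independently with probability $q\in[0,1]$, and $\bar q=1-q$. A pure strategy of a user in $N_i$ is either the direct path (DP) $(s_i,d)$ or an indirect path (IP) $(s_i,s_j,d)$, $j\neq i$. For a pure profile, $u_i$ is the number of users of $N_i$ choosing DP and $v_i$ the number of users of other sources choosing an IP $(s_j,s_i,d)$. With $T_i=u_i\phi+v_i\bar q\phi$, the total traffic rate is $TR=\sum_i\frac{\mu T_i}{T_i+\mu}$; an optimal solution is a pure profile maximizing $TR$. *)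

From mathcomp Require Import all_boot all_order all_algebra.
Set Implicit Arguments. Unset Strict Implicit. Unset Printing Implicit Defensive.
Import Order.TTheory GRing.Theory Num.Theory.
Local Open Scope ring_scope.

(* A pure strategy profile assigns to user k of source i the relay source
   (s i k) : 'I_m.  s i k = i means the direct path (s_i,d); s i k = j <> i
   means the indirect path (s_i, s_j, d). *)
Definition profile (m : nat) (n : 'I_m -> nat) := forall i : 'I_m, 'I_(n i) -> 'I_m.

Definition u_cnt m (n : 'I_m -> nat) (s : profile n) (i : 'I_m) : nat :=
  #|[pred k : 'I_(n i) | s i k == i]|.

Definition v_cnt m (n : 'I_m -> nat) (s : profile n) (i : 'I_m) : nat :=
  (\sum_(j : 'I_m | j != i) #|[pred k : 'I_(n j) | s j k == i]|)%N.

Definition Tload (R : realFieldType) m (n : 'I_m -> nat) (phi q : R)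
  (s : profile n) (i : 'I_m) : R :=
  (u_cnt s i)%:R * phi + (v_cnt s i)%:R * (1 - q) * phi.

Definition TR (R : realFieldType) m (n : 'I_m -> nat) (phi mu q : R)
  (s : profile n) : R :=
  \sum_(i : 'I_m) mu * Tload phi q s i / (Tload phi q s i + mu).

Definition optimal (R : realFieldType) m (n : 'I_m -> nat) (phi mu q : R)
  (s : profile n) : Prop :=
  forall s' : profile n, TR phi mu q s' <= TR phi mu q s.

Definition allDP m (n : 'I_m -> nat) : profile n := fun i _ => i.

From mathcomp Require Import all_boot all_order all_algebra.
From mathcomp Require Import zify ring lra.
Set Implicit Arguments. Unset Strict Implicit.
Import Order.TTheory GRing.Theory Num.Theory.
Local Open Scope ring_scope.

(** With q = 1 relayed packets are all lost and with q = 0 they all arrive,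
    so TR is the sum over the sources of the traffic x |-> mu x phi / (x phi + mu)
    served by a link carrying x flows, evaluated at u_i, respectively at
    y_i = u_i + v_i.  This function is strictly increasing with strictly
    decreasing increments.  For q = 1 every u_i is at most n_i, with equality
    for all i only in the all-DP profile.  For q = 0 the total of the y_i is
    the number of users, so TR is a concave function of a vector of fixed
    total: rerouting one user from a source i with y_i >= y_j + 2 to j
    strictly increases it, while a balanced vector attains the tangent-line
    upper bound given by concavity. *)

Section DiscreteConcavity.

Variables (R : realFieldType) (f : nat -> R).

Local Notation incr x := (f x.+1 - f x).

Hypothesis incr_decreasing : forall x, incr x.+1 < incr x.

Lemma concave_incr_lt a b : (a < b)%N -> incr b < incr a.
Proof. exact: (Order.NatMonotonyTheory.nhomo_ltn_lt (f := fun x => incr x)). Qed.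

Lemma concave_incr_le a b : (a <= b)%N -> incr b <= incr a.
Proof. by rewrite leq_eqVlt => /predU1P[-> // | /concave_incr_lt/ltW]. Qed.

Lemma concave_tangent a x : f x <= f a + (x%:R - a%:R) * incr a.
Proof.
have [ax | /ltnW xa] := leqP a x.
  have : \sum_(a <= k < x) incr k <= \sum_(a <= k < x) incr a.
    by apply: ler_sum_nat => k /andP[ak _]; apply: concave_incr_le.
  by rewrite telescope_sumr // sumr_const_nat -[incr a *+ _]mulr_natl natrB //; lra.
have : \sum_(x <= k < a) incr a <= \sum_(x <= k < a) incr k.
  by apply: ler_sum_nat => k /andP[_ ka]; apply: concave_incr_le; apply: ltnW.
by rewrite telescope_sumr // sumr_const_nat -[incr a *+ _]mulr_natl natrB //; lra.
Qed.

Lemma concave_transfer_lt a b : (b.+1 < a)%N -> f a + f b < f a.-1 + f b.+1.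
Proof. by case: a => // a; rewrite ltnS => /concave_incr_lt /=; lra. Qed.

Variable I : finType.

Lemma sum_le_balanced (i0 : I) (y z : I -> nat) :
  (forall i j, y i <= (y j).+1)%N -> (\sum_i z i = \sum_i y i)%N ->
  \sum_i f (z i) <= \sum_i f (y i).
Proof.
move=> y_bal sum_zy.
have [i1 _ y_min] := arg_minnP y (isT : xpredT i0).
set a := y i1 in y_min.
pose tangent (w : I -> nat) := \sum_i (f a + ((w i)%:R - a%:R) * incr a).
have tangent_zy : tangent z = tangent y.
  by rewrite /tangent !big_split /= -!mulr_suml !sumrB -!natr_sum sum_zy.
have tangent_y : tangent y = \sum_i f (y i).
  apply: eq_bigr => i _.
  have [-> | ->] : y i = a \/ y i = a.+1.
    by have := y_bal i i1; have := y_min i isT; rewrite /a; lia.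
  - by rewrite subrr mul0r addr0.
  - by rewrite -natr1; ring.
rewrite -tangent_y -tangent_zy.
by apply: ler_sum => i _; apply: concave_tangent.
Qed.

Lemma sum_lt_transfer (y z : I -> nat) i j :
  ((y j).+1 < y i)%N -> z i = (y i).-1 -> z j = (y j).+1 ->
  (forall l, l != i -> l != j -> z l = y l) ->
  \sum_l f (y l) < \sum_l f (z l).
Proof.
move=> yji zi zj z_eq.
have ji : j != i by apply: contraTneq yji => ->; lia.
rewrite (bigD1 i) // [ltRHS](bigD1 i) //=.
rewrite (bigD1 j) // [X in _ < _ + X](bigD1 j) //=.
rewrite [X in _ < _ + (_ + X)](eq_bigr (fun l => f (y l))); last first.
  by move=> l /andP[li lj]; rewrite z_eq.
by have := concave_transfer_lt yji; rewrite zi zj; lra.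
Qed.

End DiscreteConcavity.

Section LinkTraffic.

Variables (R : realFieldType) (phi mu : R).
Hypotheses (phi_gt0 : 0 < phi) (mu_gt0 : 0 < mu).

Definition link_traffic (x : nat) : R := mu * (x%:R * phi) / (x%:R * phi + mu).

Local Notation den x := (x%:R * phi + mu).

Let den_gt0 x : 0 < den x.
Proof. by rewrite ltr_pwDr // mulr_ge0 // ltW. Qed.

Lemma link_traffic_incrE x :
  link_traffic x.+1 - link_traffic x = mu ^+ 2 * phi / (den x * den x.+1).
Proof.
have := den_gt0 x; have := den_gt0 x.+1; rewrite /link_traffic -natr1 => d1 d0.
by field; rewrite !gt_eqF.
Qed.

Lemma link_traffic_incr_gt0 x : 0 < link_traffic x.+1 - link_traffic x.
Proof. by rewrite link_traffic_incrE !(divr_gt0, mulr_gt0, exprn_gt0, den_gt0). Qed.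

Lemma link_traffic_incr_decreasing x :
  link_traffic x.+2 - link_traffic x.+1 < link_traffic x.+1 - link_traffic x.
Proof.
have den_lt : den x < den x.+2 by rewrite ltrD2r ltr_pM2r // ltr_nat.
rewrite !link_traffic_incrE ltr_pM2l ?mulr_gt0 ?exprn_gt0 //.
rewrite ltf_pV2 ?posrE ?mulr_gt0 ?den_gt0 // mulrC ltr_pM2l ?den_gt0 //.
Qed.

Lemma link_traffic_lt : {homo link_traffic : a b / (a < b)%N >-> a < b}.
Proof.
apply: Order.NatMonotonyTheory.homo_ltn_lt => x.
by rewrite -subr_gt0 link_traffic_incr_gt0.
Qed.

Lemma link_traffic_le : {homo link_traffic : a b / (a <= b)%N >-> a <= b}.
Proof.
apply: Order.NatMonotonyTheory.nondecnP => x.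
by rewrite -subr_ge0 ltW ?link_traffic_incr_gt0.
Qed.

End LinkTraffic.

Section Profiles.

Variables (m : nat) (n : 'I_m -> nat).
Implicit Types (s : profile n) (i j : 'I_m).

Definition y_cnt s i : nat := (\sum_j #|[pred k : 'I_(n j) | s j k == i]|)%N.

Lemma u_cnt_add_v_cnt s i : (u_cnt s i + v_cnt s i)%N = y_cnt s i.
Proof. by rewrite /y_cnt (bigD1 i). Qed.

Lemma sum_y_cnt s : (\sum_i y_cnt s i)%N = (\sum_j n j)%N.
Proof.
rewrite exchange_big; apply: eq_bigr => j _.
rewrite -[RHS]card_ord -sum1_card (partition_big (s j) predT) //.
by apply: eq_bigr => i _; rewrite -sum1_card.
Qed.

Lemma y_cnt_gt0_exists s i : (0 < y_cnt s i)%N -> exists j (k : 'I_(n j)), s j k = i.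
Proof.
rewrite lt0n sum_nat_eq0 => /forallPn[j]; rewrite -lt0n => /card_gt0P[k].
by rewrite inE => /eqP; exists j, k.
Qed.

Definition reroute s j0 (k0 : 'I_(n j0)) (t : 'I_m) : profile n :=
  fun j k => if (j == j0) && (val k == val k0) then t else s j k.
(* Keep both arguments of the resulting profile explicit: by default the
   source, on which the type of the user depends, would be implicit. *)
Arguments reroute s [j0] k0 t _ _.

Lemma y_cnt_reroute s j0 (k0 : 'I_(n j0)) t i :
  (y_cnt (reroute s k0 t) i + (s j0 k0 == i) = y_cnt s i + (t == i))%N.
Proof.
rewrite /y_cnt (bigD1 j0) //= [in RHS](bigD1 j0) //=.
rewrite (eq_bigr (fun j => #|[pred k : 'I_(n j) | s j k == i]|)); last first.
  by move=> j /negbTE j_neq; apply: eq_card => k; rewrite !inE /reroute j_neq.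
rewrite (cardD1 k0) [in RHS](cardD1 k0) !inE /reroute !eqxx /=.
have -> : #|[predD1 [pred k | (if k == k0 then t else s j0 k) == i] & k0]| =
          #|[predD1 [pred k | s j0 k == i] & k0]|.
  by apply: eq_card => k; rewrite !inE; case: eqVneq.
ring.
Qed.

Lemma u_cnt_le s i : (u_cnt s i <= n i)%N.
Proof. by rewrite -[n i]card_ord max_card. Qed.

Lemma u_cnt_allDP i : u_cnt (@allDP m n) i = n i.
Proof. by rewrite -[n i]card_ord; apply: eq_card => k; rewrite inE /allDP eqxx. Qed.

Lemma u_cnt_lt s i (k : 'I_(n i)) : s i k != i -> (u_cnt s i < n i)%N.
Proof.
move=> k_IP; rewrite -[n i]card_ord; apply: proper_card; apply/properP.
by split; [exact: subset_predT | exists k; rewrite ?inE].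
Qed.

End Profiles.

Section Optimality.

Variables (R : realFieldType) (phi mu : R) (m : nat) (n : 'I_m -> nat).
Hypotheses (phi_gt0 : 0 < phi) (mu_gt0 : 0 < mu).
Implicit Types (s : profile n).

Lemma TR_lossy s : TR phi mu 1 s = \sum_i link_traffic phi mu (u_cnt s i).
Proof. by apply: eq_bigr => i _; rewrite /Tload subrr mulr0 mul0r addr0. Qed.

Lemma TR_lossless s : TR phi mu 0 s = \sum_i link_traffic phi mu (y_cnt s i).
Proof.
by apply: eq_bigr => i _; rewrite /Tload subr0 mulr1 -mulrDl -natrD u_cnt_add_v_cnt.
Qed.

Lemma allDP_optimal_lossy : optimal phi mu 1 (@allDP m n).
Proof.
move=> s; rewrite !TR_lossy; apply: ler_sum => i _.
by rewrite u_cnt_allDP link_traffic_le ?u_cnt_le.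
Qed.

Lemma optimal_lossy_allDP s : optimal phi mu 1 s -> forall i k, s i k = i.
Proof.
move=> s_opt i k; apply/eqP; apply: contraTT (s_opt (@allDP m n)) => k_IP.
rewrite -ltNge !TR_lossy (bigD1 i) // [ltRHS](bigD1 i) //= u_cnt_allDP.
rewrite ltr_leD ?link_traffic_lt ?(u_cnt_lt k_IP) //.
by apply: ler_sum => j _; rewrite u_cnt_allDP link_traffic_le ?u_cnt_le.
Qed.

Lemma optimal_lossless_balanced s :
  optimal phi mu 0 s -> forall i j, (y_cnt s i <= (y_cnt s j).+1)%N.
Proof.
move=> s_opt i j; rewrite leqNgt; apply/negP => y_ji.
have [j0 [k0 s_k0]] : exists j0 (k0 : 'I_(n j0)), s j0 k0 = i.
  by apply: y_cnt_gt0_exists; apply: leq_ltn_trans y_ji.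
have ji : j != i by apply: contraTneq y_ji => ->; lia.
have y_moved := y_cnt_reroute s k0 j.
apply/negP: (s_opt (reroute s k0 j)); rewrite -ltNge !TR_lossless.
apply: (sum_lt_transfer (link_traffic_incr_decreasing phi_gt0 mu_gt0) y_ji).
- by have := y_moved i; rewrite s_k0 eqxx (negbTE ji) /=; lia.
- by have := y_moved j; rewrite s_k0 eqxx (eq_sym i) (negbTE ji) /=; lia.
- move=> l li lj; have := y_moved l.
  by rewrite s_k0 !(eq_sym _ l) (negbTE li) (negbTE lj) /=; lia.
Qed.

Lemma balanced_optimal_lossless (i0 : 'I_m) s :
  (forall i j, y_cnt s i <= (y_cnt s j).+1)%N -> optimal phi mu 0 s.
Proof.
move=> s_bal s'; rewrite !TR_lossless.
apply: sum_le_balanced i0 _ _ s_bal _; first exact: link_traffic_incr_decreasing.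
by rewrite !sum_y_cnt.
Qed.

End Optimality.

Lemma normz_subn_le1 (a b : nat) :
  (`|a%:Z - b%:Z| <= 1) = (a <= b.+1)%N && (b <= a.+1)%N.
Proof. by apply/idP/andP => [? | [? ?]]; [split|]; lia. Qed.

Theorem corollary1 (R : realFieldType) (m : nat) (n : 'I_m -> nat) (phi mu : R) :
  (2 <= m)%N -> 0 < phi -> 0 < mu ->
  (* q = 1: the all-DP profile is the unique optimal solution *)
  (optimal phi mu 1 (@allDP m n) /\
   forall s : profile n, optimal phi mu 1 s -> forall i (k : 'I_(n i)), s i k = i)
  /\
  (* q = 0: s is optimal iff |y_i - y_j| <= 1 for all i, j, with y_i = u_i + v_i *)
  (forall s : profile n,
     optimal phi mu 0 s <->
     forall i j : 'I_m,
       `| ((u_cnt s i + v_cnt s i)%:Z - (u_cnt s j + v_cnt s j)%:Z)%R | <= 1).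
Proof.
move=> m_ge2 phi_gt0 mu_gt0; split.
  by split; [apply: allDP_optimal_lossy | apply: optimal_lossy_allDP].
move=> s; split=> [/optimal_lossless_balanced s_bal i j | s_bal].
  by rewrite !u_cnt_add_v_cnt normz_subn_le1 !s_bal.
apply: (balanced_optimal_lossless phi_gt0 mu_gt0 (Ordinal (ltnW m_ge2))) => i j.
by move: (s_bal i j); rewrite !u_cnt_add_v_cnt normz_subn_le1 => /andP[].
Qed.
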